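(* Let $\{\mathcal G,(\Gamma_0,\Gamma_1),(\widetilde\Gamma_0,\widetilde\Gamma_1)\}$ be a triple for the adjoint pair $\{S,\widetilde S\}$ satisfying (G), (D), (M), and assume $\rho(A_0)\neq\emptyset$ (equivalently $\rho(\widetilde A_0)\neq\emptyset$). Let $\gamma,\widetilde\gamma$ be the associated $\gamma$-fields. Then for all $\lambda\in\rho(A_0)$ and $\mu\in\rho(\widetilde A_0)$: (i) $\gamma(\lambda)$ and $\widetilde\gamma(\mu)$ are bounded operators from $\mathcal G$ to $\mathfrak H$ with dense domains $\operatorname{dom}\gamma(\lambda)=\operatorname{ran}\Gamma_0$, $\operatorname{dom}\widetilde\gamma(\mu)=\operatorname{ran}\widetilde\Gamma_0$, and $\operatorname{ran}\gamma(\lambda)=\ker(T-\lambda)$, $\operatorname{ran}\widetilde\gamma(\mu)=\ker(\widetilde T-\mu)$; (ii) for $\varphi\in\operatorname{ran}\Gamma_0$ and $\psi\in\operatorname{ran}\widetilde\Gamma_0$ the functions $\lambda\mapsto\gamma(\lambda)\varphi$ and $\mu\mapsto\widetilde\gamma(\mu)\psi$ are holomorphic on $\rho(A_0)$ and $\rho(\widetilde A_0)$, respectively, and $\gamma(\lambda)=(I+(\lambda-\nu)(A_0-\lambda)^{-1})\gamma(\nu)$ for $\lambda,\nu\in\rho(A_0)$, $\widetilde\gamma(\mu)=(I+(\mu-\omega)(\widetilde A_0-\mu)^{-1})\widetilde\gamma(\omega)$ for $\mu,\omega\in\rho(\widetilde A_0)$; (iii) $\gamma(\lambda)^*$ and $\widetilde\gamma(\mu)^*$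 are everywhere defined bounded operators from $\mathfrak H$ to $\mathcal G$ with $\gamma(\lambda)^*f=\widetilde\Gamma_1(\widetilde A_0-\overline\lambda)^{-1}f$ and $\widetilde\gamma(\mu)^*g=\Gamma_1(A_0-\overline\mu)^{-1}g$ for all $f,g\in\mathfrak H$; in particular $\operatorname{ran}\gamma(\lambda)^*\subset\operatorname{ran}\widetilde\Gamma_1$ and $\operatorname{ran}\widetilde\gamma(\mu)^*\subset\operatorname{ran}\Gamma_1$.
   Context: Let $\mathfrak H$ be a separable Hilbert space. An adjoint pair $\{S,\widetilde S\}$ consists of densely defined closed operators $S,\widetilde S$ in $\mathfrak H$ with $(Sf,g)=(f,\widetilde Sg)$ for all $f\in\operatorname{dom}S$, $g\in\operatorname{dom}\widetilde S$. Fix operators $T\subset S^*$ and $\widetilde T\subset\widetilde S^*$ which are cores, i.e. $\overline T=S^*$ and $\overline{\widetilde T}=\widetilde S^*$. A triple $\{\mathcal G,(\Gamma_0,\Gamma_1),(\widetilde\Gamma_0,\widetilde\Gamma_1)\}$ for $\{S,\widetilde S\}$ consists of a Hilbert space $\mathcal G$ and linear maps $\Gamma_0,\Gamma_1:\operatorname{dom}T\to\mathcal G$, $\widetilde\Gamma_0,\widetilde\Gamma_1:\operatorname{dom}\widetilde T\to\mathcal G$. Put $A_0:=T\upharpoonright\ker\Gamma_0$ and $\widetilde A_0:=\widetilde T\upharpoonright\ker\widetilde\Gamma_0$. Conditions: (G) $(Tf,g)_{\mathfrak H}-(f,\widetilde Tg)_{\mathfrak H}=(\Gamma_1f,\widetilde\Gamma_0g)_{\mathcal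 G}-(\Gamma_0f,\widetilde\Gamma_1g)_{\mathcal G}$ for all $f\in\operatorname{dom}T$, $g\in\operatorname{dom}\widetilde T$; (D) $\operatorname{ran}\Gamma_0$ and $\operatorname{ran}\widetilde\Gamma_0$ are dense in $\mathcal G$; (M) $A_0^*=\widetilde A_0$ and $\widetilde A_0^*=A_0$. For $\lambda\in\rho(A_0)$ one has $\operatorname{dom}T=\ker\Gamma_0\dotplus\ker(T-\lambda)$, so $\Gamma_0\upharpoonright\ker(T-\lambda)$ is injective with range $\operatorname{ran}\Gamma_0$; similarly for $\widetilde T$. The $\gamma$-fields are $\gamma(\lambda):=(\Gamma_0\upharpoonright\ker(T-\lambda))^{-1}$, $\lambda\in\rho(A_0)$, and $\widetilde\gamma(\mu):=(\widetilde\Gamma_0\upharpoonright\ker(\widetilde T-\mu))^{-1}$, $\mu\in\rho(\widetilde A_0)$. *)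

From HB Require Import structures.
From mathcomp Require Import all_boot all_order all_algebra.
From mathcomp Require Import complex.
From mathcomp Require Import reals.
From Stdlib Require Import ClassicalEpsilon.
Set Implicit Arguments. Unset Strict Implicit. Unset Printing Implicit Defensive.
Import Order.TTheory GRing.Theory Num.Theory.
Local Open Scope ring_scope.

Section Hilbert.
Variable R : realType.
Local Notation C := (R[i]).

Section Space.
Variable V : lmodType C.
Variable ip : V -> V -> C.   (* linear in 1st argument, antilinear in 2nd *)

Definition vnorm (x : V) : C := sqrtC (ip x x).

Definition is_inner_product : Prop :=
  [/\ forall (a : C) (x y z : V), ip (a *: x + y) z = a * ip x z + ip y z,
      forall x y : V, ip y x = conjc (ip x y),
      forall x : V, 0 <= ip x x &
      forall x : V, ip x x = 0 -> x = 0].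

Definition converges (u : nat -> V) (l : V) : Prop :=
  forall e : C, 0 < e -> exists N : nat, forall n, (N <= n)%N -> vnorm (u n - l) < e.

Definition cauchy_seq (u : nat -> V) : Prop :=
  forall e : C, 0 < e -> exists N : nat, forall n m, (N <= n)%N -> (N <= m)%N ->
    vnorm (u n - u m) < e.

Definition dense (D : V -> Prop) : Prop :=
  forall (x : V) (e : C), 0 < e -> exists y, D y /\ vnorm (x - y) < e.

Definition is_hilbert : Prop :=
  is_inner_product /\ forall u, cauchy_seq u -> exists l, converges u l.

Definition is_separable : Prop :=
  exists u : nat -> V, dense (fun x => exists n, x = u n).

End Space.

Record op (V W : lmodType C) := Op { dom : V -> Prop ; app : V -> W }.

Section Ops.
Variables (V W : lmodType C) (ipV : V -> V -> C) (ipW : W -> W -> C).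

Definition is_subspace (D : V -> Prop) : Prop :=
  D 0 /\ forall (a : C) x y, D x -> D y -> D (a *: x + y).

Definition linear_on (D : V -> Prop) (f : V -> W) : Prop :=
  is_subspace D /\
  forall (a : C) x y, D x -> D y -> f (a *: x + y) = a *: f x + f y.

Definition linear_op (A : op V W) : Prop := linear_on (dom A) (app A).

Definition densely_defined (A : op V W) : Prop := linear_op A /\ dense ipV (dom A).

Definition closed_op (A : op V W) : Prop :=
  linear_op A /\
  forall (u : nat -> V) x y, (forall n, dom A (u n)) ->
    converges ipV u x -> converges ipW (fun n => app A (u n)) y ->
    dom A x /\ app A x = y.

Definition bounded_op (A : op V W) : Prop :=
  linear_op A /\
  exists c : C, 0 <= c /\ forall x, dom A x -> vnorm ipW (app A x) <= c * vnorm ipV x.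

Definition op_sub (A B : op V W) : Prop :=
  forall x, dom A x -> dom B x /\ app B x = app A x.

(* B is the closure of A: graph B = closure of graph A (in V × W) *)
Definition is_closure_of (A B : op V W) : Prop :=
  forall x y, (dom B x /\ app B x = y) <->
    exists u : nat -> V, (forall n, dom A (u n)) /\
      converges ipV u x /\ converges ipW (fun n => app A (u n)) y.

Definition range (A : op V W) (y : W) : Prop := exists x, dom A x /\ app A x = y.

End Ops.

Definition is_adjoint (V W : lmodType C) (ipV : V -> V -> C) (ipW : W -> W -> C)
  (A : op V W) (B : op W V) : Prop :=
  forall (w : W) (v : V), (dom B w /\ app B w = v) <->
    (forall x, dom A x -> ipW (app A x) w = ipV x v).

Definition adjoint_pair (V : lmodType C) (ip : V -> V -> C) (S St : op V V) : Prop :=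
  [/\ densely_defined ip S, densely_defined ip St, closed_op ip ip S, closed_op ip ip St &
      forall f g, dom S f -> dom St g -> ip (app S f) g = ip f (app St g)].

Section Resolvent.
Variables (V : lmodType C) (ip : V -> V -> C).

Definition in_resolvent (A : op V V) (l : C) : Prop :=
  [/\ forall x, dom A x -> app A x = l *: x -> x = 0,
      forall y, exists x, dom A x /\ app A x - l *: x = y &
      exists c : C, 0 <= c /\ forall x, dom A x -> vnorm ip x <= c * vnorm ip (app A x - l *: x)].

(* (A - lambda)^{-1} y  (meaningful for lambda in rho(A)) *)
Definition resolv (A : op V V) (l : C) (y : V) : V :=
  epsilon (inhabits 0) (fun x => dom A x /\ app A x - l *: x = y).

Definition holomorphic_on (U : C -> Prop) (F : C -> V) : Prop :=
  forall z, U z -> exists v : V, forall e : C, 0 < e -> exists d : C, 0 < d /\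
    forall w, U w -> w != z -> `|w - z| < d ->
      vnorm ip ((w - z)^-1 *: (F w - F z) - v) < e.

End Resolvent.

Definition restr_ker (V W : lmodType C) (T : op V V) (G0 : V -> W) : op V V :=
  Op (fun f => dom T f /\ G0 f = 0) (app T).

(* gamma-field: gamma(lambda) = (Gamma0 |` ker(T - lambda))^{-1},
   an operator G -> H with domain ran Gamma0 *)
Definition gamma_field (V W : lmodType C) (T : op V V) (G0 : V -> W) (l : C) : op W V :=
  Op (fun phi => exists f, dom T f /\ G0 f = phi)
     (fun phi => epsilon (inhabits 0)
        (fun f => dom T f /\ app T f = l *: f /\ G0 f = phi)).

Definition ker_shift (V : lmodType C) (T : op V V) (l : C) (f : V) : Prop :=
  dom T f /\ app T f = l *: f.

End Hilbert.

From mathcomp Require Import all_boot all_order all_algebra.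
From mathcomp Require Import complex reals.
From mathcomp Require Import lra ring.
From Stdlib Require Import ClassicalEpsilon Classical.
Set Implicit Arguments. Unset Strict Implicit. Unset Printing Implicit Defensive.
Import Order.TTheory GRing.Theory Num.Theory Normc.
Local Open Scope ring_scope.
Local Open Scope complex_scope.

(* For [h] in [dom T], [h - (A0 - l)^-1 (T - l) h] is the unique element of
   [ker (T - l)] with the same [G0]-value, so [gamma l] is well defined, and
   [(I + (l - nu) (A0 - l)^-1) gamma nu] is [gamma l] since it lies in
   [ker (T - l)] and has the same [G0]-values; with the resolvent identity this
   gives holomorphy.  As [At0 = A0^*], the conjugate [conj l] lies in [rho(At0)]:
   [At0 - conj l] is bounded below, so its range is closed, and the orthogonal
   complement of that range is [ker (A0 - l) = 0].  Green's identity applied to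
   [gamma l phi] and [(At0 - conj l)^-1 f] gives
   [<gamma l phi, f> = <phi, Gt1 (At0 - conj l)^-1 f>].  Hence [gamma l] is weakly
   bounded, so bounded by the uniform boundedness principle (a nested-ball Baire
   argument in the complete space [H]), and, [ran G0] being dense, this formula
   is its adjoint.  The other half follows from the symmetric Green identity. *)

Lemma normc_ge0 (R : rcfType) (z : R[i]) : 0 <= normc z.
Proof. by case: z => a b; apply: sqrtr_ge0. Qed.

Lemma normc_sqr (R : rcfType) (z : R[i]) : normc z ^+ 2 = complex.Re z ^+ 2 + complex.Im z ^+ 2.
Proof. by case: z => a b /=; rewrite sqr_sqrtr // addr_ge0 // sqr_ge0. Qed.

Lemma norm_normc (R : rcfType) (z : R[i]) : `|z| = (normc z)%:C.
Proof. by case: z. Qed.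

Lemma normcR (R : rcfType) (r : R) : normc r%:C = `|r|.
Proof. by rewrite /= expr0n /= addr0 sqrtr_sqr. Qed.

Lemma normc_conj (R : rcfType) (z : R[i]) : normc (conjc z) = normc z.
Proof. by case: z => a b; rewrite /= sqrrN. Qed.

Lemma normcB (R : rcfType) (a b : R[i]) : normc (a - b) = normc (b - a).
Proof. by rewrite -normcN opprB. Qed.

Lemma Re_le_normc (R : rcfType) (z : R[i]) : `|complex.Re z| <= normc z.
Proof.
rewrite -ler_sqr ?nnegrE ?normc_ge0 // normc_sqr real_normK ?num_real //.
by rewrite lerDl sqr_ge0.
Qed.

Lemma gtc0_real (R : rcfType) (e : R[i]) : 0 < e -> e = (complex.Re e)%:C /\ 0 < complex.Re e.
Proof. by case: e => a b; rewrite ltcE /= => /andP [/eqP -> h]. Qed.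

Lemma gec0_real (R : rcfType) (e : R[i]) : 0 <= e -> e = (complex.Re e)%:C /\ 0 <= complex.Re e.
Proof. by case: e => a b; rewrite lecE /= => /andP [/eqP -> h]. Qed.

Section InnerProduct.
Variable R : realType.
Local Notation C := R[i].
Variables (V : lmodType C) (ip : V -> V -> C).
Hypothesis hip : is_inner_product ip.

Lemma ipDZl a x y z : ip (a *: x + y) z = a * ip x z + ip y z.
Proof. by case: hip => h _ _ _; apply: h. Qed.
Lemma ipC x y : ip y x = conjc (ip x y).
Proof. by case: hip => _ h _ _; apply: h. Qed.
Lemma ip_ge0 x : 0 <= ip x x.
Proof. by case: hip => _ _ h _; apply: h. Qed.
Lemma ip_eq0 x : ip x x = 0 -> x = 0.
Proof. by case: hip => _ _ _ h; apply: h. Qed.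

Lemma ip0l z : ip 0 z = 0.
Proof.
have := ipDZl 1 0 0 z; rewrite scale1r addr0 mul1r => /eqP.
by rewrite -subr_eq0 opprD addrA subrr add0r oppr_eq0 => /eqP.
Qed.
Lemma ipDl x y z : ip (x + y) z = ip x z + ip y z.
Proof. by rewrite -[x]scale1r ipDZl mul1r scale1r. Qed.
Lemma ipZl a x z : ip (a *: x) z = a * ip x z.
Proof. by rewrite -[a *: x]addr0 ipDZl ip0l addr0. Qed.
Lemma ipNl x z : ip (- x) z = - ip x z.
Proof. by rewrite -scaleN1r ipZl mulN1r. Qed.
Lemma ipBl x y z : ip (x - y) z = ip x z - ip y z.
Proof. by rewrite ipDl ipNl. Qed.
Lemma ip0r z : ip z 0 = 0.
Proof. by rewrite ipC ip0l conjc0. Qed.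
Lemma ipDr x y z : ip z (x + y) = ip z x + ip z y.
Proof. by rewrite ipC ipDl rmorphD /= -!ipC. Qed.
Lemma ipZr a x z : ip z (a *: x) = conjc a * ip z x.
Proof. by rewrite ipC ipZl rmorphM /= -ipC. Qed.
Lemma ipNr x z : ip z (- x) = - ip z x.
Proof. by rewrite ipC ipNl rmorphN /= -ipC. Qed.
Lemma ipBr x y z : ip z (x - y) = ip z x - ip z y.
Proof. by rewrite ipDr ipNr. Qed.

Definition sqnorm x : R := complex.Re (ip x x).

Lemma ipxxE x : ip x x = (sqnorm x)%:C.
Proof. by have := ip_ge0 x; rewrite /sqnorm; case: (ip x x) => a b /gec0_real []. Qed.
Lemma sqnorm_ge0 x : 0 <= sqnorm x.
Proof. by have := ip_ge0 x; rewrite ipxxE lecR. Qed.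
Lemma sqnorm_eq0 x : sqnorm x = 0 -> x = 0.
Proof. by move=> h; apply: ip_eq0; rewrite ipxxE h. Qed.

Lemma sqnormD x y : sqnorm (x + y) = sqnorm x + sqnorm y + 2 * complex.Re (ip x y).
Proof.
rewrite /sqnorm ipDl !ipDr (ipC x y).
by case: (ip x y) => a b /=; rewrite !raddfD /=; lra.
Qed.

Lemma sqnormZ a x : sqnorm (a *: x) = normc a ^+ 2 * sqnorm x.
Proof. by rewrite /sqnorm ipZl ipZr ipxxE normc_sqr; case: a => a b /=; lra. Qed.

Definition ipnorm x : R := Num.sqrt (sqnorm x).

Lemma ipnorm_ge0 x : 0 <= ipnorm x. Proof. exact: sqrtr_ge0. Qed.
Lemma sqr_ipnorm x : ipnorm x ^+ 2 = sqnorm x.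
Proof. by rewrite sqr_sqrtr // sqnorm_ge0. Qed.
Lemma vnormE x : vnorm ip x = (ipnorm x)%:C.
Proof. by rewrite /vnorm ipxxE -sqr_ipnorm rmorphXn /= sqrCK // lecR ipnorm_ge0. Qed.
Lemma ipnorm_eq0 x : ipnorm x = 0 -> x = 0.
Proof. by move=> h; apply: sqnorm_eq0; rewrite -sqr_ipnorm h expr0n. Qed.
Lemma ipnorm0 : ipnorm 0 = 0.
Proof. by rewrite /ipnorm /sqnorm ip0l /= sqrtr0. Qed.

Lemma cauchy_schwarz x y : normc (ip x y) <= ipnorm x * ipnorm y.
Proof.
rewrite -ler_sqr ?nnegrE ?normc_ge0 ?mulr_ge0 ?ipnorm_ge0 //.
rewrite normc_sqr exprMn !sqr_ipnorm.
have [y0|y0] := eqVneq (sqnorm y) 0.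
  by rewrite (sqnorm_eq0 y0) ip0r /sqnorm ip0l /= expr0n /= addr0 mulr0.
have ypos : 0 < sqnorm y by rewrite lt_def y0 sqnorm_ge0.
(* expand [0 <= |<y,y> x - <x,y> y|^2] *)
have := sqnorm_ge0 ((sqnorm y)%:C *: x - ip x y *: y).
rewrite /sqnorm ipBl !ipBr !ipZl !ipZr !ipxxE (ipC x y) conjc_real.
move: ypos; case: (ip x y) => a1 a2; move: (sqnorm y) (sqnorm x) => q p /= hq h.
have : 0 <= q * (q * p - (a1 ^+ 2 + a2 ^+ 2)) by lra.
by rewrite pmulr_rge0 //; lra.
Qed.

Lemma ipnormD x y : ipnorm (x + y) <= ipnorm x + ipnorm y.
Proof.
rewrite -ler_sqr ?nnegrE ?addr_ge0 ?ipnorm_ge0 //.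
rewrite sqr_ipnorm sqnormD sqrrD !sqr_ipnorm.
have := cauchy_schwarz x y; have := Re_le_normc (ip x y).
have := ler_norm (complex.Re (ip x y)); lra.
Qed.

Lemma ipnormZ a x : ipnorm (a *: x) = normc a * ipnorm x.
Proof. by rewrite /ipnorm sqnormZ sqrtrM ?sqr_ge0 // sqrtr_sqr ger0_norm // normc_ge0. Qed.
Lemma ipnormN x : ipnorm (- x) = ipnorm x.
Proof. by rewrite -scaleN1r ipnormZ normcN -(rmorph1 (real_complex R)) normcR normr1 mul1r. Qed.
Lemma ipnormB x y : ipnorm (x - y) = ipnorm (y - x).
Proof. by rewrite -ipnormN opprB. Qed.

Lemma parallelogram a b :
  sqnorm (a + b) + sqnorm (a - b) = 2 * sqnorm a + 2 * sqnorm b.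
Proof. by rewrite !sqnormD -(sqr_ipnorm (- b)) ipnormN sqr_ipnorm ipNr raddfN /=; lra. Qed.

End InnerProduct.

Definition ccvg (R : realType) (s : nat -> R[i]) (c : R[i]) : Prop :=
  forall e : R, 0 < e -> exists N, forall n, (N <= n)%N -> normc (s n - c) < e.

Lemma ccvg_unique (R : realType) (s : nat -> R[i]) c d : ccvg s c -> ccvg s d -> c = d.
Proof.
move=> hc hd; apply/eqP; rewrite -subr_eq0; apply/eqP; apply: eq0_normc.
apply/eqP; rewrite eq_le normc_ge0 andbT; apply/ler_addgt0Pr => e he.
have [N1 h1] := hc (e / 2) ltac:(lra); have [N2 h2] := hd (e / 2) ltac:(lra).
have := h1 (maxn N1 N2) (leq_maxl _ _); have := h2 (maxn N1 N2) (leq_maxr _ _).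
have := le_normcD (s (maxn N1 N2) - d) (c - s (maxn N1 N2)).
by rewrite normcB addrC addrA subrK [normc (s _ - c)]normcB; lra.
Qed.

Lemma ccvg_ext (R : realType) (s t : nat -> R[i]) c :
  (forall n, s n = t n) -> ccvg s c -> ccvg t c.
Proof. by move=> st h e /h [N hN]; exists N => n hn; rewrite -st hN. Qed.

Section Convergence.
Variable R : realType.
Local Notation C := R[i].
Variables (V : lmodType C) (ip : V -> V -> C).
Hypothesis hip : is_inner_product ip.

Definition cvg_to (u : nat -> V) (l : V) : Prop :=
  forall e : R, 0 < e -> exists N, forall n, (N <= n)%N -> ipnorm ip (u n - l) < e.

Definition cauchy (u : nat -> V) : Prop :=
  forall e : R, 0 < e -> exists N, forall n m, (N <= n)%N -> (N <= m)%N ->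
    ipnorm ip (u n - u m) < e.

Lemma convergesP u l : converges ip u l <-> cvg_to u l.
Proof.
split => h e he.
  have [N hN] := h e%:C ltac:(by rewrite ltcR).
  by exists N => n /hN; rewrite (vnormE hip) ltcR.
have [-> he'] := gtc0_real he; have [N hN] := h _ he'.
by exists N => n /hN; rewrite (vnormE hip) ltcR.
Qed.

Lemma cauchy_seqP u : cauchy_seq ip u <-> cauchy u.
Proof.
split => h e he.
  have [N hN] := h e%:C ltac:(by rewrite ltcR).
  by exists N => n m /hN h2 /h2; rewrite (vnormE hip) ltcR.
have [-> he'] := gtc0_real he; have [N hN] := h _ he'.
by exists N => n m /hN h2 /h2; rewrite (vnormE hip) ltcR.
Qed.

Lemma hilbert_complete : is_hilbert ip -> forall u, cauchy u -> exists l, cvg_to u l.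
Proof. by case=> _ hc u /cauchy_seqP /hc [l /convergesP hl]; exists l. Qed.

Lemma cvg_to_cauchy u x : cvg_to u x -> cauchy u.
Proof.
move=> hu e he; have [N hN] := hu (e / 2) ltac:(lra).
exists N => n m hn hm; have := hN n hn; have := hN m hm.
have := ipnormD hip (u n - x) (x - u m).
by rewrite addrA subrK (ipnormB hip x); lra.
Qed.

Lemma cvg_toD u v x y : cvg_to u x -> cvg_to v y -> cvg_to (fun n => u n + v n) (x + y).
Proof.
move=> hu hv e he.
have [N1 h1] := hu (e / 2) ltac:(lra); have [N2 h2] := hv (e / 2) ltac:(lra).
exists (maxn N1 N2) => n hn.
have := h1 n (leq_trans (leq_maxl _ _) hn); have := h2 n (leq_trans (leq_maxr _ _) hn).
have := ipnormD hip (u n - x) (v n - y).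
by rewrite addrACA -opprD; lra.
Qed.

Lemma cvg_toZ u x a : cvg_to u x -> cvg_to (fun n => a *: u n) (a *: x).
Proof.
move=> hu e he; have ha := normc_ge0 a.
have [N hN] := hu (e / (normc a + 1)) ltac:(apply: divr_gt0 => //; lra).
exists N => n /hN; rewrite ltr_pdivlMr; last lra.
rewrite -scalerBr (ipnormZ hip) => h.
by have := ipnorm_ge0 ip (u n - x); nra.
Qed.

Lemma ccvg_ipl u x z : cvg_to u x -> ccvg (fun n => ip (u n) z) (ip x z).
Proof.
move=> h e he; have hz := ipnorm_ge0 ip z.
have [N hN] := h (e / (ipnorm ip z + 1)) ltac:(apply: divr_gt0 => //; lra).
exists N => n /hN hn; rewrite -(ipBl hip).
apply: le_lt_trans (cauchy_schwarz hip _ _) _.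
have hu := ipnorm_ge0 ip (u n - x).
by rewrite ltr_pdivlMr in hn; [nra | lra].
Qed.

Lemma ccvg_ipr u x z : cvg_to u x -> ccvg (fun n => ip z (u n)) (ip z x).
Proof.
move=> h e /(ccvg_ipl z h) [N hN].
by exists N => n /hN; rewrite !(ipC hip z) -rmorphB /= normc_conj.
Qed.

Lemma dense_orthogonal_eq0 (D : V -> Prop) w :
  dense ip D -> (forall x, D x -> ip x w = 0) -> w = 0.
Proof.
move=> hD hw; apply: (ipnorm_eq0 hip); apply/eqP.
rewrite eq_le ipnorm_ge0 andbT; apply/ler_addgt0Pr => e he.
have [y [Dy]] := hD w e%:C ltac:(by rewrite ltcR).
rewrite (vnormE hip) ltcR add0r => hy.
have e1 : sqnorm ip w = complex.Re (ip (w - y) w).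
  by rewrite /sqnorm (ipBl hip) (hw y Dy) subr0.
have := Re_le_normc (ip (w - y) w); have := cauchy_schwarz hip (w - y) w.
have := ler_norm (complex.Re (ip (w - y) w)).
rewrite -e1 -(sqr_ipnorm hip) => h1 h2 h3.
have := ipnorm_ge0 ip w; have := ipnorm_ge0 ip (w - y); nra.
Qed.

End Convergence.

Section InvSucc.
Variable R : realType.

Definition inv_succ (n : nat) : R := (n.+1%:R)^-1.

Lemma inv_succ_gt0 n : 0 < inv_succ n.
Proof. by rewrite /inv_succ invr_gt0 ltr0Sn. Qed.
Lemma inv_succ_le1 n : inv_succ n <= 1.
Proof. by rewrite /inv_succ invf_le1 ?ltr0Sn // ler1n. Qed.
Lemma inv_succ_le k n : (k <= n)%N -> inv_succ n <= inv_succ k.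
Proof. by move=> h; rewrite /inv_succ lef_pV2 ?posrE ?ltr0Sn // ler_nat ltnS. Qed.
Lemma inv_succ_lt (c : R) : 0 < c -> exists k, inv_succ k < c.
Proof. by move=> /ltr_add_invr [k]; rewrite add0r => h; exists k. Qed.

End InvSucc.

Section Subspace.
Variable R : realType.
Variables (V : lmodType R[i]) (M : V -> Prop).
Hypothesis hM : is_subspace M.

Lemma subspace0 : M 0. Proof. by case: hM. Qed.
Lemma subspaceZ a x : M x -> M (a *: x).
Proof. by case: hM => h0 h hx; have := h a x 0 hx h0; rewrite addr0. Qed.
Lemma subspaceD x y : M x -> M y -> M (x + y).
Proof. by case: hM => h0 h hx hy; have := h 1 x y hx hy; rewrite scale1r. Qed.
Lemma subspaceB x y : M x -> M y -> M (x - y).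
Proof. by move=> hx hy; rewrite -scaleN1r; apply: subspaceD => //; apply: subspaceZ. Qed.

End Subspace.

Section Projection.
Variable R : realType.
Local Notation C := R[i].
Variables (V : lmodType C) (ip : V -> V -> C).
Hypothesis hH : is_hilbert ip.
Let hip : is_inner_product ip. Proof. by case: hH. Qed.
Local Notation nrm := (ipnorm ip).
Variables (M : V -> Prop) (hM : is_subspace M).

Lemma minimizing_cauchy y d (m : nat -> V) : 0 <= d ->
  (forall x, M x -> d <= nrm (y - x)) ->
  (forall n, M (m n) /\ nrm (y - m n) < d + inv_succ R n) -> cauchy ip m.
Proof.
move=> d0 dlow hm.
have hQ n k : sqnorm ip (m n - m k) <= (4 * d + 4) * (inv_succ R n + inv_succ R k).
  have [Mn hn] := hm n; have [Mk hk] := hm k.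
  (* the midpoint of [m n] and [m k] lies in [M], hence is at distance [>= d] from [y] *)
  have := dlow _ (subspaceZ hM (2^-1) (subspaceD hM Mn Mk)).
  have e1 : (y - m n) + (y - m k) = (2%:R : C) *: (y - (2^-1 : C) *: (m n + m k)).
    rewrite scalerBr scalerA mulfV ?pnatr_eq0 // scale1r scaler_nat mulr2n.
    by rewrite opprD addrACA.
  have e2 : (y - m n) - (y - m k) = - (m n - m k).
    by rewrite [y - m n]addrC addrKA opprK opprB addrC.
  have := parallelogram hip (y - m n) (y - m k); rewrite e1 e2.
  rewrite -(sqr_ipnorm hip (- _)) (ipnormN hip) (sqnormZ hip).
  rewrite -(rmorph_nat (real_complex R)) normcR normr_nat -!(sqr_ipnorm hip).
  have := inv_succ_gt0 R n; have := inv_succ_gt0 R k.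
  have := inv_succ_le1 R n; have := inv_succ_le1 R k.
  have := ipnorm_ge0 ip (y - m n); have := ipnorm_ge0 ip (y - m k).
  have := ipnorm_ge0 ip (y - (2^-1 : C) *: (m n + m k)).
  move: hn hk; move: (nrm _) (nrm _) (nrm _) (nrm (m n - m k)) (inv_succ R n) (inv_succ R k).
  by move=> a b c q en ek; rewrite -[2%:R]/(2 : R); nra.
move=> e he.
have hpos : 0 < 8 * d + 8 by lra.
have [k hk] := inv_succ_lt (divr_gt0 (mulr_gt0 he he) hpos).
exists k => n l hn hl; rewrite ltNge; apply/negP => hle.
have := hQ n l; rewrite -(sqr_ipnorm hip).
have := inv_succ_le R hn; have := inv_succ_le R hl; have := inv_succ_gt0 R k.
rewrite ltr_pdivlMr in hk => //.
have : e ^+ 2 <= nrm (m n - m l) ^+ 2 by rewrite ler_sqr ?nnegrE ?ipnorm_ge0 //; lra.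
nra.
Qed.

Lemma exists_nearest_point y :
  (forall u x, (forall n, M (u n)) -> cvg_to ip u x -> M x) ->
  exists2 p, M p & forall x, M x -> nrm (y - p) <= nrm (y - x).
Proof.
move=> hcl.
pose E r := exists x, M x /\ r = nrm (y - x).
have hE0 : E (nrm (y - 0)) by exists 0; split => //; apply: subspace0.
have hinf : classical_sets.has_inf E.
  by split; [exists (nrm (y - 0)) | exists 0 => r [x [_ ->]]; apply: ipnorm_ge0].
have d0 : 0 <= inf E.
  by apply: lb_le_inf; [exists (nrm (y - 0)) | move=> r [x [_ ->]]; apply: ipnorm_ge0].
have dlow x : M x -> inf E <= nrm (y - x) by move=> hx; apply: (ge_inf hinf.2); exists x.
have happ n : exists x, M x /\ nrm (y - x) < inf E + inv_succ R n.
  by have [r [x [hx ->]] hr] := inf_adherent (inv_succ_gt0 R n) hinf; exists x.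
pose m n := epsilon (inhabits 0) (fun x => M x /\ nrm (y - x) < inf E + inv_succ R n).
have hm n : M (m n) /\ nrm (y - m n) < inf E + inv_succ R n.
  exact: (epsilon_spec (inhabits 0) _ (happ n)).
have [p hp] := hilbert_complete hip hH (minimizing_cauchy d0 dlow hm).
have Mp : M p by apply: (hcl m) => // n; case: (hm n).
exists p => // x /dlow; apply: le_trans; apply/ler_addgt0Pr => e he.
have [N hN] := hp (e / 2) ltac:(lra).
have [k hk] := @inv_succ_lt R (e / 2) ltac:(lra).
have := hN (maxn N k) (leq_maxl _ _); have := inv_succ_le R (leq_maxr N k).
have := proj2 (hm (maxn N k)); have := ipnormD hip (y - m (maxn N k)) (m (maxn N k) - p).
by rewrite addrA subrK; lra.
Qed.

Lemma nearest_point_orthogonal y p :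
  M p -> (forall x, M x -> nrm (y - p) <= nrm (y - x)) ->
  forall z, M z -> ip (y - p) z = 0.
Proof.
move=> Mp hmin z Mz; set w := y - p.
have hq := sqnorm_ge0 hip z.
pose s : R := (sqnorm ip z + 1)^-1.
have hs0 : 0 < s by rewrite invr_gt0; lra.
have hsz : s * sqnorm ip z < 1 by rewrite /s mulrC ltr_pdivrMr; lra.
pose t := s%:C * ip w z.
(* compare [y - p] with [y - (p + t z)], for the step [t] along [z] *)
have := hmin (p + t *: z) (subspaceD hM Mp (subspaceZ hM _ Mz)).
have -> : y - (p + t *: z) = w + (- t) *: z by rewrite /w scaleNr opprD addrA.
rewrite -ler_sqr ?nnegrE ?ipnorm_ge0 // !(sqr_ipnorm hip).
rewrite (sqnormD hip w) (sqnormZ hip) (ipZr hip) normc_sqr /t.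
move: hsz hs0; move: (sqnorm ip z) hq (ip w z) => q hq [a1 a2] /= hsz hs0 h.
have E1 : ((- (s * a1 - 0 * a2)) ^+ 2 + (- (s * a2 + 0 * a1)) ^+ 2) * q +
    2 * (- (s * a1 - 0 * a2) * a1 - - - (s * a2 + 0 * a1) * a2) =
    (s * (s * q - 2)) * (a1 ^+ 2 + a2 ^+ 2) by ring.
rewrite -addrA E1 lerDl nmulr_rge0 in h; last by rewrite pmulr_rlt0 //; lra.
have : a1 ^+ 2 + a2 ^+ 2 == 0 by rewrite eq_le h addr_ge0 ?sqr_ge0.
by rewrite paddr_eq0 ?sqr_ge0 // !sqrf_eq0 => /andP [/eqP -> /eqP ->].
Qed.

Theorem closed_subspace_full :
  (forall u x, (forall n, M (u n)) -> cvg_to ip u x -> M x) ->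
  (forall w, (forall z, M z -> ip z w = 0) -> w = 0) -> forall y, M y.
Proof.
move=> hcl horth y; have [p Mp hmin] := exists_nearest_point y hcl.
suff : y - p = 0 by move/eqP; rewrite subr_eq0 => /eqP ->.
apply: horth => z Mz.
by rewrite (ipC hip) (nearest_point_orthogonal Mp hmin Mz) conjc0.
Qed.

End Projection.

Section Baire.
Variable R : realType.
Local Notation C := R[i].
Variables (V : lmodType C) (ip : V -> V -> C).
Hypothesis hH : is_hilbert ip.
Let hip : is_inner_product ip. Proof. by case: hH. Qed.
Local Notation nrm := (ipnorm ip).

(* [gs = (g, s)]: the closed ball [B(g, s)] lies in [B(f, r)], has radius at
   most [1/(n+1)] and misses [L]. *)
Definition shrinking_ball (L : V -> Prop) (n : nat) (f : V) (r : R) (gs : V * R) :=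
  [/\ 0 < gs.2, gs.2 <= r / 2, gs.2 <= inv_succ R n, nrm (gs.1 - f) <= r / 2 &
      forall g, nrm (g - gs.1) <= gs.2 -> ~ L g].

Lemma baire_nested_balls (L : nat -> V -> Prop) :
  (forall n f r, 0 < r -> exists gs, shrinking_ball (L n) n f r gs) ->
  exists fs, forall n, ~ L n fs.
Proof.
move=> hstep.
pose step n (fr : V * R) := epsilon (inhabits (0, 0)) (shrinking_ball (L n) n fr.1 fr.2).
pose x := fix x n : V * R := if n is k.+1 then step k (x k) else (0, 1).
have xS k : x k.+1 = step k (x k) by [].
have hpos k : 0 < (x k).2.
  elim: k => [|k IH]; first exact: ltr01.
  by rewrite xS /step; case: (epsilon_spec (inhabits (0, 0)) _ (hstep k (x k).1 (x k).2 IH)).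
have hP k : shrinking_ball (L k) k (x k).1 (x k).2 (x k.+1).
  by rewrite xS /step; apply: epsilon_spec; apply: hstep; apply: hpos.
have center k : nrm ((x k).1 - (x k).1) <= (x k).2 by rewrite subrr (ipnorm0 hip) ltW.
have nested k j : (k <= j)%N -> forall g, nrm (g - (x j).1) <= (x j).2 ->
    nrm (g - (x k).1) <= (x k).2.
  elim: j => [|j IH]; first by rewrite leqn0 => /eqP ->.
  rewrite leq_eqVlt => /orP [/eqP -> //|]; rewrite ltnS => hkj g hg.
  apply: IH => //; case: (hP j) => _ hs1 _ hg1 _.
  have := ipnormD hip (g - (x j.+1).1) ((x j.+1).1 - (x j).1).
  by rewrite addrA subrK; lra.
have hc : cauchy ip (fun k => (x k).1).
  move=> e he; have [K hK] := @inv_succ_lt R (e / 2) ltac:(lra).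
  exists K.+1 => n m hn hm.
  have := nested _ _ hn _ (center n); have := nested _ _ hm _ (center m).
  case: (hP K) => _ _ hs _ _.
  have := ipnormD hip ((x n).1 - (x K.+1).1) ((x K.+1).1 - (x m).1).
  by rewrite addrA subrK (ipnormB hip (x K.+1).1); lra.
have [fs hfs] := hilbert_complete hip hH hc.
have ball k : nrm (fs - (x k).1) <= (x k).2.
  apply/ler_addgt0Pr => e /hfs [N /(_ (maxn N k) (leq_maxl _ _)) /= hN].
  have := nested _ _ (leq_maxr N k) _ (center (maxn N k)).
  have := ipnormD hip (fs - (x (maxn N k)).1) ((x (maxn N k)).1 - (x k).1).
  by rewrite addrA subrK (ipnormB hip fs (x (maxn N k)).1); lra.
by exists fs => k; case: (hP k) => _ _ _ _; apply; apply: ball.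
Qed.

End Baire.

Section UniformBoundedness.
Variable R : realType.
Local Notation C := R[i].
Variables (V : lmodType C) (ip : V -> V -> C).
Hypothesis hH : is_hilbert ip.
Let hip : is_inner_product ip. Proof. by case: hH. Qed.
Variables (W : lmodType C) (ipW : W -> W -> C) (D : W -> Prop) (F : W -> V).
Local Notation nrm := (ipnorm ip).
Local Notation nrmW := (ipnorm ipW).

Definition weak_level (n : nat) (g : V) :=
  forall p, D p -> normc (ip (F p) g) <= n%:R * nrmW p.

Definition bounded_on := exists c : R, 0 <= c /\ forall p, D p -> nrm (F p) <= c * nrmW p.

Lemma normc_ipB v a b : normc (ip v a) <= normc (ip v b) + nrm v * nrm (a - b).
Proof.
have := le_normcD (ip v b) (ip v (a - b)); rewrite -(ipDr hip) addrC subrK.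
by have := cauchy_schwarz hip v (a - b); lra.
Qed.

Lemma ball_in_level_bounded f0 r n :
  0 < r -> (forall h, nrm h <= r -> weak_level n (f0 + h)) -> bounded_on.
Proof.
move=> hr hb.
have c0 : 0 <= 2 * n%:R / r by apply: divr_ge0 (ltW hr); apply: mulr_ge0; apply: ler0n.
exists (2 * n%:R / r); split => //.
move=> p Dp; set v := F p.
have [v0|v0] := eqVneq (nrm v) 0.
  by rewrite v0; apply: mulr_ge0 => //; apply: ipnorm_ge0.
have vpos : 0 < nrm v by rewrite lt_def v0 ipnorm_ge0.
(* test the two points [f0] and [f0 + h] with [h] the multiple of [v] of norm [r] *)
pose h := (r / nrm v)%:C *: v.
have hn : nrm h = r.
  by rewrite /h (ipnormZ hip) normcR ger0_norm ?divr_ge0 ?ipnorm_ge0 ?ltW // divfK.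
have h1 : normc (ip v (f0 + h)) <= n%:R * nrmW p by apply: hb => //; rewrite hn.
have h0 : normc (ip v (f0 + 0)) <= n%:R * nrmW p.
  by apply: hb => //; rewrite (ipnorm0 hip) ltW.
rewrite addr0 in h0.
have := le_normcD (ip v (f0 + h)) (- ip v f0).
rewrite normcN -(ipBr hip) [f0 + h]addrC addrK.
have -> : ip v h = (r * nrm v)%:C.
  rewrite /h (ipZr hip) conjc_real (ipxxE hip) -(sqr_ipnorm hip) -rmorphM /=.
  by congr (_%:C); rewrite expr2 mulrA divfK.
rewrite normcR ger0_norm; last by apply: mulr_ge0; [apply: ltW | apply: ipnorm_ge0].
by rewrite mulrAC ler_pdivlMr // [h + f0]addrC; lra.
Qed.

Lemma unbounded_shrinking_ball : ~ bounded_on ->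
  forall n f r, 0 < r -> exists gs, shrinking_ball ip (weak_level n) n f r gs.
Proof.
move=> hunb n f r hr.
have [h [hh [p [Dp hp]]]] : exists h, nrm h <= r / 2 /\
    exists p, D p /\ n%:R * nrmW p < normc (ip (F p) (f + h)).
  apply: NNPP => hno; apply/hunb/(@ball_in_level_bounded f (r / 2) n) => [|h hh p Dp].
    lra.
  by rewrite leNgt; apply/negP => hlt; apply: hno; exists h; split => //; exists p.
(* [g' |-> <F p, g'>] is Lipschitz, so a small ball around [f + h] stays above level [n] *)
pose gap := normc (ip (F p) (f + h)) - n%:R * nrmW p.
have gap0 : 0 < gap by rewrite /gap subr_gt0.
have hN := ipnorm_ge0 ip (F p).
pose q := gap / (2 * (nrm (F p) + 1)).
have q0 : 0 < q by rewrite /q divr_gt0 //; lra.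
have hq : q * (2 * (nrm (F p) + 1)) = gap by rewrite /q divfK //; lra.
pose s := Order.min (r / 2) (Order.min (inv_succ R n) q).
have s0 : 0 < s by rewrite /s !lt_min inv_succ_gt0 q0 /=; lra.
have s1 : s <= r / 2 by rewrite /s ge_min lexx.
have s2 : s <= inv_succ R n by rewrite /s ge_min !ge_min lexx orbT.
have s3 : s <= q by rewrite /s ge_min !ge_min lexx !orbT.
exists (f + h, s); split => //=; first by rewrite [f + h]addrC addrK.
move=> g' hg' /(_ p Dp); have := normc_ipB (F p) (f + h) g'.
rewrite (ipnormB hip (f + h) g').
have : nrm (F p) * nrm (g' - (f + h)) <= nrm (F p) * q.
  by apply: ler_wpM2l => //; apply: le_trans hg' s3.
have := ipnorm_ge0 ip (g' - (f + h)); rewrite /gap in gap0 hq.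
by move: (nrm (F p)) hN hq => N hN hq; nra.
Qed.

Theorem uniform_boundedness :
  (forall f : V, exists Mf : R, forall p, D p -> normc (ip (F p) f) <= Mf * nrmW p) ->
  bounded_on.
Proof.
move=> hweak; apply: NNPP => hunb.
have [fs hfs] := baire_nested_balls hH (unbounded_shrinking_ball hunb).
have [Mf hMf] := hweak fs.
apply: (hfs (Num.bound `|Mf|)) => p Dp.
apply: le_trans (hMf p Dp) _; apply: ler_wpM2r; first exact: ipnorm_ge0.
exact: le_trans (ler_norm Mf) (ltW (archi_boundP (normr_ge0 Mf))).
Qed.

End UniformBoundedness.

Section LinearOn.
Variable R : realType.
Variables (V W : lmodType R[i]) (D : V -> Prop) (f : V -> W).
Hypothesis hf : linear_on D f.

Lemma linear_onD x y : D x -> D y -> f (x + y) = f x + f y.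
Proof. by case: hf => _ h hx hy; have := h 1 x y hx hy; rewrite !scale1r. Qed.
Lemma linear_on0 : f 0 = 0.
Proof.
case: hf => [[h0 _] _]; have := linear_onD h0 h0.
by rewrite addr0 => /(congr1 (fun v => v - f 0)); rewrite subrr addrK.
Qed.
Lemma linear_onZ a x : D x -> f (a *: x) = a *: f x.
Proof.
case: (hf) => [[h0 _] h] hx.
by have := h a x 0 hx h0; rewrite !addr0 linear_on0 addr0.
Qed.
Lemma linear_onB x y : D x -> D y -> f (x - y) = f x - f y.
Proof.
move=> hx hy; rewrite -scaleN1r -[- f y]scaleN1r -linear_onZ //.
by rewrite linear_onD //; case: hf => hs _; apply: subspaceZ.
Qed.

End LinearOn.

Lemma adjoint_linear (R : realType) (V W : lmodType R[i])
    (ipV : V -> V -> R[i]) (ipW : W -> W -> R[i]) (A : op V W) (B : op W V) :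
  is_inner_product ipV -> is_inner_product ipW -> is_adjoint ipV ipW A B -> linear_op B.
Proof.
move=> hV hW hA.
have hcomb a w1 w2 : dom B w1 -> dom B w2 ->
    dom B (a *: w1 + w2) /\ app B (a *: w1 + w2) = a *: app B w1 + app B w2.
  move=> h1 h2; apply/(hA _ (a *: app B w1 + app B w2)) => x hx.
  rewrite (ipDr hW) (ipZr hW) (ipDr hV) (ipZr hV).
  by rewrite (proj1 (hA _ _) (conj h1 erefl)) // (proj1 (hA _ _) (conj h2 erefl)).
split; first split.
- by case: (proj2 (hA 0 0)) => // x _; rewrite (ip0r hW) (ip0r hV).
- by move=> a w1 w2 h1 h2; case: (hcomb a w1 w2 h1 h2).
- by move=> a w1 w2 h1 h2; case: (hcomb a w1 w2 h1 h2).
Qed.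

Lemma op_sub_linear (R : realType) (V : lmodType R[i]) (ip : V -> V -> R[i])
    (S Sst T : op V V) :
  is_inner_product ip -> is_adjoint ip ip S Sst -> op_sub T Sst ->
  is_subspace (dom T) -> linear_op T.
Proof.
move=> hip hSst hTsub hsT; split => // a x y hx hy.
have [d1 e1] := hTsub x hx; have [d2 e2] := hTsub y hy.
have [_ e3] := hTsub _ (subspaceD hsT (subspaceZ hsT a hx) hy).
by rewrite -e1 -e2 -e3; case: (adjoint_linear hip hip hSst) => _ ->.
Qed.

Lemma restr_ker_linear (R : realType) (V W : lmodType R[i]) (T : op V V) (G0 : V -> W) :
  linear_op T -> linear_on (dom T) G0 -> linear_op (restr_ker T G0).
Proof.
move=> [hsT hT] hG0; split; first split.
- by split; [exact: subspace0 | exact: linear_on0 hG0].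
- move=> a x y [hx gx] [hy gy]; split; first by case: hsT => _; apply.
  by case: hG0 => _ ->; rewrite // gx gy scaler0 addr0.
- by move=> a x y [hx _] [hy _]; apply: hT.
Qed.

Section Resolvent.
Variable R : realType.
Local Notation C := R[i].
Variables (V : lmodType C) (ip : V -> V -> C).
Hypothesis hip : is_inner_product ip.
Variables (A : op V V) (hA : linear_op A).
Let hsA : is_subspace (dom A). Proof. by case: hA. Qed.

Section Point.
Variables (l : C) (hl : in_resolvent ip A l).

Lemma resolvP y : dom A (resolv A l y) /\ app A (resolv A l y) - l *: resolv A l y = y.
Proof. by case: hl => _ hs _; apply: (epsilon_spec (inhabits 0) _ (hs y)). Qed.

Lemma resolv_unique x y : dom A x -> app A x - l *: x = y -> x = resolv A l y.
Proof.
move=> hx hxy; have [hr er] := resolvP y.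
case: hl => hinj _ _; apply/eqP; rewrite -subr_eq0; apply/eqP.
apply: hinj; first exact: subspaceB.
rewrite (linear_onB hA) // scalerBr.
have -> : app A x = l *: x + y by rewrite -hxy addrC subrK.
move: er; set r := resolv A l y => er.
have -> : app A r = y + l *: r by rewrite -{1}er subrK.
by rewrite addrKA.
Qed.

Lemma resolv_bounded : exists2 c : R, 0 < c & forall y, ipnorm ip (resolv A l y) <= c * ipnorm ip y.
Proof.
case: hl => _ _ [c [/gec0_real [ce c0] hc]].
exists (complex.Re c + 1) => [|y]; first lra.
have [hr er] := resolvP y.
have := hc _ hr; rewrite er !(vnormE hip) ce -rmorphM lecR.
by have := ipnorm_ge0 ip y; nra.
Qed.

Lemma resolv_linear a y1 y2 : resolv A l (a *: y1 + y2) = a *: resolv A l y1 + resolv A l y2.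
Proof.
have [h1 e1] := resolvP y1; have [h2 e2] := resolvP y2.
move: h1 e1 h2 e2; set r1 := resolv A l y1; set r2 := resolv A l y2 => h1 e1 h2 e2.
symmetry; apply: resolv_unique; first by apply: subspaceD => //; apply: subspaceZ.
case: hA => _ ->; rewrite // -e1 -e2.
by rewrite scalerDr scalerA mulrC -scalerA scalerBr opprD addrACA.
Qed.

End Point.

Lemma resolvent_identity z w : in_resolvent ip A z -> in_resolvent ip A w ->
  forall y, resolv A w y - resolv A z y = (w - z) *: resolv A w (resolv A z y).
Proof.
move=> hz hw y.
have [ha ea] := resolvP hz y; move: ha ea; set a := resolv A z y => ha ea.
have [hb eb] := resolvP hw a; move: hb eb; set b := resolv A w a => hb eb.
suff -> : resolv A w y = (w - z) *: b + a by rewrite addrK.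
symmetry; apply: (resolv_unique hw); first by apply: subspaceD => //; apply: subspaceZ.
case: hA => _ ->; rewrite //.
have -> : app A a = y + z *: a by rewrite -ea subrK.
have -> : app A b = a + w *: b by rewrite -eb subrK.
rewrite !scalerDr !scalerA (mulrC w (w - z)) scalerBl.
by rewrite (addrC y) addrA [_ - _ + _]addrAC subrK (addrC (_ *: b)) [_ + y]addrC addrK.
Qed.

End Resolvent.

Section AdjointResolvent.
Variable R : realType.
Local Notation C := R[i].
Variables (V : lmodType C) (ip : V -> V -> C).
Hypothesis hH : is_hilbert ip.
Let hip : is_inner_product ip. Proof. by case: hH. Qed.
Local Notation nrm := (ipnorm ip).
Variables (A B : op V V).
Hypotheses (hAB : is_adjoint ip ip A B) (hBA : is_adjoint ip ip B A).
Let hB : linear_op B. Proof. exact: adjoint_linear hAB. Qed.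
Let hsB : is_subspace (dom B). Proof. by case: hB. Qed.
Variables (l : C) (hl : in_resolvent ip A l).

Definition shifted_range (y : V) := exists x, dom B x /\ app B x - conjc l *: x = y.

Lemma adjoint_shift h x : dom A h -> dom B x ->
  ip (app A h - l *: h) x = ip h (app B x - conjc l *: x).
Proof.
move=> hh hx; have e := proj1 (hAB x (app B x)) (conj hx erefl) h hh.
by rewrite (ipBl hip) (ipBr hip) (ipZl hip) (ipZr hip) conjcK e.
Qed.

Lemma adjoint_shift_lower_bound :
  exists2 c : R, 0 < c & forall x, dom B x -> nrm x <= c * nrm (app B x - conjc l *: x).
Proof.
have [c c0 hc] := resolv_bounded hip hl.
exists c => // x hx; set y := app B x - _.
have [hr er] := resolvP hl x; set r := resolv A l x in hr er *.
(* [|x|^2 = <(A - l) r, x> = <r, (B - conj l) x>] with [r := (A - l)^-1 x] *)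
have e : nrm x ^+ 2 = complex.Re (ip r y) by rewrite (sqr_ipnorm hip) /sqnorm -adjoint_shift // er.
have : nrm x ^+ 2 <= c * nrm y * nrm x.
  rewrite e; apply: le_trans (ler_norm _) _; apply: le_trans (Re_le_normc _) _.
  apply: le_trans (cauchy_schwarz hip _ _) _.
  by rewrite mulrAC; apply: ler_wpM2r; [exact: ipnorm_ge0 | exact: hc].
have [x0|x0] := eqVneq (nrm x) 0.
  by move=> _; rewrite x0; apply: mulr_ge0; [apply: ltW | apply: ipnorm_ge0].
have xp : 0 < nrm x by rewrite lt_def x0 ipnorm_ge0.
by rewrite expr2 ler_pM2r.
Qed.

Lemma shifted_range_subspace : is_subspace shifted_range.
Proof.
split; first by exists 0; rewrite (linear_on0 hB) scaler0 subr0; split => //; apply: subspace0.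
move=> a y1 y2 [x1 [h1 <-]] [x2 [h2 <-]].
exists (a *: x1 + x2); split; first by apply: subspaceD => //; apply: subspaceZ.
case: hB => _ ->; rewrite //.
by rewrite scalerDr scalerA mulrC -scalerA scalerBr opprD addrACA.
Qed.

Lemma shifted_range_closed u y :
  (forall n, shifted_range (u n)) -> cvg_to ip u y -> shifted_range y.
Proof.
move=> hu hconv; have [c c0 hc] := adjoint_shift_lower_bound.
pose x n := epsilon (inhabits 0) (fun x => dom B x /\ app B x - conjc l *: x = u n).
have hx n : dom B (x n) /\ app B (x n) - conjc l *: x n = u n.
  exact: (epsilon_spec (inhabits 0) _ (hu n)).
have hcx : cauchy ip x.
  move=> e he; have [N hN] := cvg_to_cauchy hip hconv (divr_gt0 he c0).
  exists N => n m hn hm; have [h1 e1] := hx n; have [h2 e2] := hx m.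
  have := hc _ (subspaceB hsB h1 h2); rewrite (linear_onB hB) // scalerBr.
  have -> : app B (x n) - app B (x m) - (conjc l *: x n - conjc l *: x m) = u n - u m.
    by rewrite -e1 -e2 !opprB [LHS]addrACA [RHS]addrACA [- (conjc l *: _) + _]addrC.
  move=> hnm.
  by apply: le_lt_trans hnm _; rewrite mulrC -ltr_pdivlMr //; apply: hN.
have [xs hxs] := hilbert_complete hip hH hcx.
(* pass to the limit in [<A h, x n> = <h, u n + conj l x n>] *)
have key h : dom A h -> ip (app A h) xs = ip h (y + conjc l *: xs).
  move=> hh; apply: (ccvg_unique (ccvg_ipr hip _ hxs)).
  apply: (@ccvg_ext _ (fun n => ip h (u n + conjc l *: x n))).
    move=> n; have [h1 e1] := hx n.
    by rewrite -e1 subrK (proj1 (hAB (x n) (app B (x n))) (conj h1 erefl) h hh).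
  by apply: ccvg_ipr => //; apply: cvg_toD => //; apply: cvg_toZ.
have [hxs' exs] := proj2 (hAB xs (y + conjc l *: xs)) key.
by exists xs; split => //; rewrite exs addrK.
Qed.

Lemma shifted_range_orthogonal w : (forall y, shifted_range y -> ip y w = 0) -> w = 0.
Proof.
move=> hw.
have key x : dom B x -> ip (app B x) w = ip x (l *: w).
  move=> hx; have := hw _ (ex_intro _ x (conj hx erefl)).
  by rewrite (ipBl hip) (ipZl hip) (ipZr hip) => /eqP; rewrite subr_eq0 => /eqP.
have [hw' ew] := proj2 (hBA w (l *: w)) key.
by case: hl => hinj _ _; apply: hinj.
Qed.

Theorem conj_in_resolvent : in_resolvent ip B (conjc l).
Proof.
have [c c0 hc] := adjoint_shift_lower_bound; split.
- move=> x hx ex; apply: (ipnorm_eq0 hip); apply/eqP; rewrite eq_le ipnorm_ge0 andbT.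
  by have := hc x hx; rewrite ex subrr (ipnorm0 hip) mulr0.
- exact (closed_subspace_full hH shifted_range_subspace
    (@shifted_range_closed) (@shifted_range_orthogonal)).
- exists c%:C; split; first by rewrite lecR ltW.
  by move=> x hx; rewrite !(vnormE hip) -rmorphM lecR; apply: hc.
Qed.

End AdjointResolvent.

Section GammaField.
Variable R : realType.
Local Notation C := R[i].
Variables (V W : lmodType C) (ip : V -> V -> C).
Hypothesis hip : is_inner_product ip.
Local Notation nrm := (ipnorm ip).
Variables (T : op V V) (G0 : V -> W).
Hypotheses (hT : linear_op T) (hG0 : linear_on (dom T) G0).
Let hsT : is_subspace (dom T). Proof. by case: hT. Qed.
Local Notation A0 := (restr_ker T G0).
Let hA0 : linear_op A0. Proof. exact: restr_ker_linear. Qed.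
Local Notation ranG0 := (fun phi => exists f, dom T f /\ G0 f = phi).
Local Notation gamma l := (gamma_field T G0 l).

Section Point.
Variables (l : C) (hl : in_resolvent ip A0 l).

Lemma ker_shift_inj f f' : ker_shift T l f -> ker_shift T l f' -> G0 f = G0 f' -> f = f'.
Proof.
move=> [hf ef] [hf' ef'] eg; apply/eqP; rewrite -subr_eq0; apply/eqP.
case: hl => hinj _ _; apply: hinj.
  by split; [exact: subspaceB | rewrite (linear_onB hG0) // eg subrr].
by rewrite /= (linear_onB hT) // ef ef' scalerBr.
Qed.

(* [f := h - (A0 - l)^-1 (T - l) h] lies in [ker (T - l)] and has [G0 f = G0 h] *)
Lemma ker_shift_exists h : dom T h -> exists2 f, ker_shift T l f & G0 f = G0 h.
Proof.
move=> hh; have [[hk gk] ek] := resolvP hl (app T h - l *: h).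
move: hk gk ek; set k := resolv _ _ _ => hk gk /= ek.
exists (h - k); last by rewrite (linear_onB hG0) // gk subr0.
split; first exact: subspaceB.
rewrite (linear_onB hT) //.
have -> : app T k = app T h - l *: h + l *: k by rewrite -ek subrK.
by rewrite scalerBr opprD addrA opprB subrKC.
Qed.

Lemma gamma_fieldP phi : ranG0 phi ->
  ker_shift T l (app (gamma l) phi) /\ G0 (app (gamma l) phi) = phi.
Proof.
move=> [h [hh <-]]; have [f [hf ef] gf] := ker_shift_exists hh.
have [hf' [ef' gf']] := epsilon_spec (inhabits 0)
  (fun f => dom T f /\ app T f = l *: f /\ G0 f = G0 h) (ex_intro _ f (conj hf (conj ef gf))).
by split.
Qed.

Lemma gamma_field_eq phi f : ker_shift T l f -> G0 f = phi -> app (gamma l) phi = f.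
Proof.
move=> hf gf; have [hg gg] := gamma_fieldP (ex_intro _ f (conj hf.1 gf)).
by apply: ker_shift_inj => //; rewrite gg gf.
Qed.

Lemma gamma_field_linear : linear_op (gamma l).
Proof.
split; first split.
- by exists 0; split; [exact: subspace0 | exact: linear_on0 hG0].
- move=> a p1 p2 [f1 [h1 <-]] [f2 [h2 <-]].
  exists (a *: f1 + f2); split; first by apply: subspaceD => //; apply: subspaceZ.
  by case: hG0 => _ ->.
- move=> a p1 p2 D1 D2.
  have [[h1 e1] g1] := gamma_fieldP D1; have [[h2 e2] g2] := gamma_fieldP D2.
  apply: gamma_field_eq; last by case: hG0 => _ ->; rewrite ?g1 ?g2.
  split; first by apply: subspaceD => //; apply: subspaceZ.
  by case: hT => _ ->; rewrite // e1 e2 scalerA mulrC -scalerA scalerDr.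
Qed.

Lemma gamma_field_range f : range (gamma l) f <-> ker_shift T l f.
Proof.
split; first by move=> [p [Dp <-]]; case: (gamma_fieldP Dp).
by move=> hf; exists (G0 f); split; [exists f; case: hf | exact: gamma_field_eq].
Qed.

End Point.

Lemma gamma_field_resolvent l n : in_resolvent ip A0 l -> in_resolvent ip A0 n ->
  forall phi, ranG0 phi ->
  app (gamma l) phi = app (gamma n) phi + (l - n) *: resolv A0 l (app (gamma n) phi).
Proof.
move=> hl hn phi Dp; have [[hu eu] gu] := gamma_fieldP hn Dp.
move: hu eu gu; set u := app (gamma n) phi => hu eu gu.
have [[hk gk] ek] := resolvP hl u; move: hk gk ek; set k := resolv A0 l u => hk gk ek /=.
rewrite addrC; apply: gamma_field_eq => //; last first.
  by case: hG0 => _ ->; rewrite // gk scaler0 add0r.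
split; first by apply: subspaceD => //; apply: subspaceZ.
case: hT => _ ->; rewrite //.
have -> : app T k = u + l *: k by rewrite -ek subrK.
rewrite eu !scalerDr !scalerA (mulrC l (l - n)) scalerBl.
by rewrite [_ + n *: u]addrC addrA subrKC addrC.
Qed.

Lemma resolv_bounded_near z c : in_resolvent ip A0 z -> 0 < c ->
  (forall y, nrm (resolv A0 z y) <= c * nrm y) ->
  forall w, in_resolvent ip A0 w -> normc (w - z) * (2 * c) <= 1 ->
  forall y, nrm (resolv A0 w y) <= 2 * c * nrm y.
Proof.
move=> hz c0 hc w hw hwz y.
have [hx ex] := resolvP hw y; move: hx ex; set x := resolv A0 w y => hx ex.
have exz : x = resolv A0 z (y + (w - z) *: x).
  by apply: (resolv_unique hA0 hz hx); rewrite -ex scalerBl subrKA.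
have := hc (y + (w - z) *: x); rewrite -exz => h.
have := ipnormD hip y ((w - z) *: x); rewrite (ipnormZ hip) => h2.
have := normc_ge0 (w - z); have := ipnorm_ge0 ip x; have := ipnorm_ge0 ip y.
nra.
Qed.

Theorem gamma_field_holomorphic phi : ranG0 phi ->
  holomorphic_on ip (in_resolvent ip A0) (fun l => app (gamma l) phi).
Proof.
move=> Dp z hz; set u := app (gamma z) phi.
exists (resolv A0 z u) => e /gtc0_real [-> e0]; set r := complex.Re e in e0 *.
have [c c0 hc] := resolv_bounded hip hz.
set N := nrm (resolv A0 z u); have hN : 0 <= N by apply: ipnorm_ge0.
pose d := Order.min (2 * c)^-1 (r / (2 * c * (N + 1))).
have d0 : 0 < d by rewrite lt_min invr_gt0 mulr_gt0 //= divr_gt0 // !mulr_gt0 //; lra.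
exists d%:C; split; first by rewrite ltcR.
move=> w hw wz; rewrite norm_normc ltcR => hwz; have hm0 := normc_ge0 (w - z).
have hd1 : normc (w - z) * (2 * c) <= 1.
  rewrite -ler_pdivlMr ?mulr_gt0 // div1r.
  by apply: le_trans (ltW hwz) _; rewrite ge_min lexx.
have hd2 : normc (w - z) * (2 * c * (N + 1)) < r.
  rewrite -ltr_pdivlMr ?mulr_gt0 //; last lra.
  by apply: lt_le_trans hwz _; rewrite ge_min lexx orbT.
(* the difference quotient is [R_w u], and [R_w u - R_z u = (w - z) R_w R_z u] *)
have -> : (w - z)^-1 *: (app (gamma w) phi - u) = resolv A0 w u.
  rewrite (gamma_field_resolvent hw hz Dp) -/u [u + _]addrC addrK scalerA mulVf ?scale1r //.
  by rewrite subr_eq0.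
rewrite (resolvent_identity hA0 hz hw) (vnormE hip) (ipnormZ hip) ltcR.
have := resolv_bounded_near hz c0 hc hw hd1 (resolv A0 z u); rewrite -/N => hb.
have : normc (w - z) * nrm (resolv A0 w (resolv A0 z u)) <= normc (w - z) * (2 * c * N).
  by apply: ler_wpM2l.
have : normc (w - z) * (2 * c * N) <= normc (w - z) * (2 * c * (N + 1)).
  by apply: ler_wpM2l => //; apply: ler_wpM2l; [apply: mulr_ge0; lra | lra].
lra.
Qed.

End GammaField.

Lemma dense_adjoint_bound (R : realType) (V W : lmodType R[i])
    (ipV : V -> V -> R[i]) (ipW : W -> W -> R[i]) (D : W -> Prop) (F : W -> V) c w f :
  is_inner_product ipV -> is_inner_product ipW -> dense ipW D -> 0 <= c ->
  (forall p, D p -> ipnorm ipV (F p) <= c * ipnorm ipW p) ->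
  (forall p, D p -> ipW p w = ipV (F p) f) -> ipnorm ipW w <= c * ipnorm ipV f.
Proof.
move=> hV hW hD c0 hc hwf.
have hw0 := ipnorm_ge0 ipW w; have hf0 := ipnorm_ge0 ipV f.
suff : ipnorm ipW w ^+ 2 <= c * ipnorm ipV f * ipnorm ipW w.
  have [->|x0] := eqVneq (ipnorm ipW w) 0; first by rewrite mulr_ge0.
  by rewrite expr2 ler_pM2r // lt_def x0 hw0.
apply/ler_addgt0Pr => e he.
have hden : 0 < ipnorm ipW w + c * ipnorm ipV f + 1 by have := mulr_ge0 c0 hf0; lra.
pose e' := e / (ipnorm ipW w + c * ipnorm ipV f + 1).
have he' : 0 < e' by apply: divr_gt0.
have [p [Dp]] := hD w e'%:C ltac:(by rewrite ltcR).
rewrite (vnormE hW) ltcR => hp.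
(* [|w|^2 = <w - p, w> + <F p, f>] with [p in D] close to [w] *)
have e1 : ipnorm ipW w ^+ 2 = complex.Re (ipW (w - p) w) + complex.Re (ipV (F p) f).
  by rewrite (sqr_ipnorm hW) /sqnorm -hwf // -raddfD /= -(ipDl hW) subrK.
have h1 := Re_le_normc (ipW (w - p) w); have h1' := ler_norm (complex.Re (ipW (w - p) w)).
have h2 := Re_le_normc (ipV (F p) f); have h2' := ler_norm (complex.Re (ipV (F p) f)).
have h3 := cauchy_schwarz hW (w - p) w; have h4 := cauchy_schwarz hV (F p) f.
have h6 : ipnorm ipW p <= ipnorm ipW w + e'.
  by have := ipnormD hW w (p - w); rewrite addrC subrK (ipnormB hW p w); lra.
have k1 : ipnorm ipW (w - p) * ipnorm ipW w <= e' * ipnorm ipW w.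
  by apply: ler_wpM2r => //; apply: ltW.
have k2 : ipnorm ipV (F p) * ipnorm ipV f <= c * (ipnorm ipW w + e') * ipnorm ipV f.
  by apply: ler_wpM2r => //; apply: le_trans (hc p Dp) _; apply: ler_wpM2l.
have k4 : e' * (ipnorm ipW w + c * ipnorm ipV f + 1) = e by rewrite /e' divfK // gt_eqF.
have k5 : e' * (ipnorm ipW w + c * ipnorm ipV f) <= e' * (ipnorm ipW w + c * ipnorm ipV f + 1).
  by apply: ler_wpM2l; [apply: ltW | lra].
rewrite e1; lra.
Qed.

Section BoundaryTriple.
Variable R : realType.
Local Notation C := R[i].
Variables (H G : lmodType C) (ipH : H -> H -> C) (ipG : G -> G -> C).
Hypotheses (hH : is_hilbert ipH) (hipG : is_inner_product ipG).
Let hip : is_inner_product ipH. Proof. by case: hH. Qed.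
Variables (T Tt : op H H) (G0 G1 Gt0 Gt1 : H -> G).
Hypotheses (hT : linear_op T) (hTt : linear_op Tt).
Hypotheses (hG0 : linear_on (dom T) G0) (hGt0 : linear_on (dom Tt) Gt0)
  (hGt1 : linear_on (dom Tt) Gt1).
Hypothesis green : forall f g, dom T f -> dom Tt g ->
  ipH (app T f) g - ipH f (app Tt g) = ipG (G1 f) (Gt0 g) - ipG (G0 f) (Gt1 g).
Hypothesis hD : dense ipG (fun phi => exists f, dom T f /\ G0 f = phi).
Hypotheses (hM1 : is_adjoint ipH ipH (restr_ker T G0) (restr_ker Tt Gt0))
  (hM2 : is_adjoint ipH ipH (restr_ker Tt Gt0) (restr_ker T G0)).
Local Notation A0 := (restr_ker T G0).
Local Notation At0 := (restr_ker Tt Gt0).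
Local Notation ranG0 := (fun phi => exists f, dom T f /\ G0 f = phi).
Variables (l : C) (hl : in_resolvent ipH A0 l).
Local Notation gamma := (gamma_field T G0 l).
Local Notation Rt := (resolv At0 (conjc l)).
Let hlt : in_resolvent ipH At0 (conjc l).
Proof. exact (conj_in_resolvent hH hM1 hM2 hl). Qed.
Let hAt0 : linear_op At0. Proof. exact: restr_ker_linear. Qed.

Lemma resolv_conj_dom f : dom Tt (Rt f). Proof. by have [[] ] := resolvP hlt f. Qed.

(* Green's identity for [gamma phi in ker (T - l)] and [Rt f in ker Gt0] *)
Lemma gamma_field_adjointE phi f : ranG0 phi -> ipH (app gamma phi) f = ipG phi (Gt1 (Rt f)).
Proof.
move=> Dp; have [[hf ef] gf] := gamma_fieldP hT hG0 hl Dp.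
have [[hg gg] eg] := resolvP hlt f.
move: hf ef gf hg gg eg; set fl := app gamma phi; set g := Rt f => hf ef gf hg gg eg.
have e2 : app Tt g = f + conjc l *: g by rewrite -eg subrK.
have := green hf hg; rewrite ef e2 gg gf (ip0r hipG) (ipZl hip) (ipDr hip) (ipZr hip) conjcK.
by rewrite opprD addrA addrAC subrr !sub0r => /oppr_inj.
Qed.

Lemma gamma_field_bounded : exists c : R, 0 <= c /\
  forall phi, ranG0 phi -> ipnorm ipH (app gamma phi) <= c * ipnorm ipG phi.
Proof.
apply: (uniform_boundedness hH) => f; exists (ipnorm ipG (Gt1 (Rt f))) => p Dp.
by rewrite gamma_field_adjointE // mulrC; apply: cauchy_schwarz.
Qed.

Lemma gamma_field_spec :
  [/\ bounded_op ipG ipH gamma, dom gamma = ranG0, dense ipG (dom gamma) &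
      forall f, range gamma f <-> ker_shift T l f].
Proof.
split => //; last exact: (gamma_field_range hT hG0 hl).
split; first exact: (gamma_field_linear hT hG0 hl).
have [c [c0 hc]] := gamma_field_bounded; exists c%:C; split; first by rewrite lecR.
by move=> x hx; rewrite !vnormE // -rmorphM lecR; apply: hc.
Qed.

Lemma gamma_field_adjoint_spec :
  [/\ is_adjoint ipG ipH gamma (Op (fun _ : H => True) (fun f => Gt1 (Rt f))),
      bounded_op ipH ipG (Op (fun _ : H => True) (fun f => Gt1 (Rt f))) &
      forall f, exists g, dom Tt g /\ Gt1 g = Gt1 (Rt f)].
Proof.
split; last by move=> f; exists (Rt f); split => //; apply: resolv_conj_dom.
- move=> w v; split; first by move=> [_ <-] x Dx; apply: gamma_field_adjointE.
  move=> h; split => //=; apply/eqP; rewrite eq_sym -subr_eq0; apply/eqP.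
  apply: (dense_orthogonal_eq0 hipG hD) => x Dx.
  by rewrite (ipBr hipG) -h // gamma_field_adjointE // subrr.
- split.
    split => // a y1 y2 _ _ /=.
    by rewrite (resolv_linear hAt0 hlt); case: hGt1 => _ ->; rewrite //; apply: resolv_conj_dom.
  have [c [c0 hc]] := gamma_field_bounded; exists c%:C; split; first by rewrite lecR.
  move=> f _ /=; rewrite !vnormE // -rmorphM lecR.
  apply: (dense_adjoint_bound hip hipG hD c0 hc) => p Dp.
  by rewrite gamma_field_adjointE.
Qed.

End BoundaryTriple.

Lemma green_identity_sym (R : realType) (H G : lmodType R[i])
    (ipH : H -> H -> R[i]) (ipG : G -> G -> R[i]) (T Tt : op H H) (G0 G1 Gt0 Gt1 : H -> G) :
  is_inner_product ipH -> is_inner_product ipG ->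
  (forall f g, dom T f -> dom Tt g ->
    ipH (app T f) g - ipH f (app Tt g) = ipG (G1 f) (Gt0 g) - ipG (G0 f) (Gt1 g)) ->
  forall g f, dom Tt g -> dom T f ->
    ipH (app Tt g) f - ipH g (app T f) = ipG (Gt1 g) (G0 f) - ipG (Gt0 g) (G1 f).
Proof.
move=> hipH hipG green g f hg hf; have := green f g hf hg => /(congr1 conjc).
rewrite !rmorphB /= -!(ipC hipH) -!(ipC hipG) => h.
by rewrite -opprB h opprB.
Qed.

Unset Implicit Arguments.
Local Close Scope complex_scope.

Theorem proposition3p3
  (R : realType)
  (H : lmodType R[i]) (ipH : H -> H -> R[i])
  (hH : is_hilbert ipH) (sepH : is_separable ipH)
  (G : lmodType R[i]) (ipG : G -> G -> R[i]) (hG : is_hilbert ipG)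
  (S St : op H H) (hS : adjoint_pair ipH S St)
  (Sst Stst : op H H)
  (hSst : is_adjoint ipH ipH S Sst) (hStst : is_adjoint ipH ipH St Stst)
  (T Tt : op H H)
  (hTsub : op_sub T Sst) (hTtsub : op_sub Tt Stst)
  (hTcl : is_closure_of ipH ipH T Sst) (hTtcl : is_closure_of ipH ipH Tt Stst)
  (G0 G1 : H -> G) (Gt0 Gt1 : H -> G)
  (hG0 : linear_on (dom T) G0) (hG1 : linear_on (dom T) G1)
  (hGt0 : linear_on (dom Tt) Gt0) (hGt1 : linear_on (dom Tt) Gt1)
  (condG : forall f g, dom T f -> dom Tt g ->
     ipH (app T f) g - ipH f (app Tt g) = ipG (G1 f) (Gt0 g) - ipG (G0 f) (Gt1 g))
  (condD : dense ipG (fun phi => exists f, dom T f /\ G0 f = phi) /\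
           dense ipG (fun psi => exists g, dom Tt g /\ Gt0 g = psi))
  (condM : is_adjoint ipH ipH (restr_ker T G0) (restr_ker Tt Gt0) /\
           is_adjoint ipH ipH (restr_ker Tt Gt0) (restr_ker T G0))
  (hrho : exists l, in_resolvent ipH (restr_ker T G0) l) :
  (forall l, in_resolvent ipH (restr_ker T G0) l ->
     [/\ bounded_op ipG ipH (gamma_field T G0 l),
         dom (gamma_field T G0 l) = (fun phi => exists f, dom T f /\ G0 f = phi),
         dense ipG (dom (gamma_field T G0 l)) &
         forall f, range (gamma_field T G0 l) f <-> ker_shift T l f]) /\
  (forall mu, in_resolvent ipH (restr_ker Tt Gt0) mu ->
     [/\ bounded_op ipG ipH (gamma_field Tt Gt0 mu),
         dom (gamma_field Tt Gt0 mu) = (fun psi => exists g, dom Tt g /\ Gt0 g = psi),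
         dense ipG (dom (gamma_field Tt Gt0 mu)) &
         forall g, range (gamma_field Tt Gt0 mu) g <-> ker_shift Tt mu g]) /\
  (forall phi, (exists f, dom T f /\ G0 f = phi) ->
     holomorphic_on ipH (in_resolvent ipH (restr_ker T G0))
       (fun l => app (gamma_field T G0 l) phi)) /\
  (forall psi, (exists g, dom Tt g /\ Gt0 g = psi) ->
     holomorphic_on ipH (in_resolvent ipH (restr_ker Tt Gt0))
       (fun mu => app (gamma_field Tt Gt0 mu) psi)) /\
  (forall l nu, in_resolvent ipH (restr_ker T G0) l -> in_resolvent ipH (restr_ker T G0) nu ->
     forall phi, (exists f, dom T f /\ G0 f = phi) ->
       app (gamma_field T G0 l) phi =
       app (gamma_field T G0 nu) phi
         + (l - nu) *: resolv (restr_ker T G0) l (app (gamma_field T G0 nu) phi)) /\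
  (forall mu om, in_resolvent ipH (restr_ker Tt Gt0) mu -> in_resolvent ipH (restr_ker Tt Gt0) om ->
     forall psi, (exists g, dom Tt g /\ Gt0 g = psi) ->
       app (gamma_field Tt Gt0 mu) psi =
       app (gamma_field Tt Gt0 om) psi
         + (mu - om) *: resolv (restr_ker Tt Gt0) mu (app (gamma_field Tt Gt0 om) psi)) /\
  (forall l, in_resolvent ipH (restr_ker T G0) l ->
     [/\ is_adjoint ipG ipH (gamma_field T G0 l)
           (Op (fun _ : H => True) (fun f => Gt1 (resolv (restr_ker Tt Gt0) (conjc l) f))),
         bounded_op ipH ipG
           (Op (fun _ : H => True) (fun f => Gt1 (resolv (restr_ker Tt Gt0) (conjc l) f))) &
         forall f, exists g, dom Tt g /\ Gt1 g = Gt1 (resolv (restr_ker Tt Gt0) (conjc l) f)]) /\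
  (forall mu, in_resolvent ipH (restr_ker Tt Gt0) mu ->
     [/\ is_adjoint ipG ipH (gamma_field Tt Gt0 mu)
           (Op (fun _ : H => True) (fun g => G1 (resolv (restr_ker T G0) (conjc mu) g))),
         bounded_op ipH ipG
           (Op (fun _ : H => True) (fun g => G1 (resolv (restr_ker T G0) (conjc mu) g))) &
         forall g, exists f, dom T f /\ G1 f = G1 (resolv (restr_ker T G0) (conjc mu) g)]).

Proof.
have hipH : is_inner_product ipH by case: hH.
have hipG : is_inner_product ipG by case: hG.
have hT : linear_op T by apply: (op_sub_linear hipH hSst hTsub); case: hG0.
have hTt : linear_op Tt by apply: (op_sub_linear hipH hStst hTtsub); case: hGt0.
have green' := green_identity_sym hipH hipG condG.
case: condD => hD hDt; case: condM => hM hMt.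
split; first by move=> l; apply: (gamma_field_spec hH hipG hT hG0 condG hD hM hMt).
split; first by move=> l; apply: (gamma_field_spec hH hipG hTt hGt0 green' hDt hMt hM).
split; first by move=> phi; apply: (gamma_field_holomorphic hipH hT hG0).
split; first by move=> psi; apply: (gamma_field_holomorphic hipH hTt hGt0).
split; first exact: (gamma_field_resolvent hT hG0).
split; first exact: (gamma_field_resolvent hTt hGt0).
split.
  by move=> l; apply: (gamma_field_adjoint_spec hH hipG hT hTt hG0 hGt0 hGt1 condG hD hM hMt).
by move=> l; apply: (gamma_field_adjoint_spec hH hipG hTt hT hGt0 hG0 hG1 green' hDt hMt hM).
Qed.
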